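(* Let $A$ be a real $n\times n$ matrix, $\alpha>0$, and $F_{A,\alpha}(u)=|u|^\alpha Au$ for $u\in\mathbb R^n$. (i) If there exists $\lambda>0$ with $\|A-\lambda I_n\|_{\mathrm{op}}\le\frac{\lambda}{1+\alpha}$, then $F_{A,\alpha}$ is monotone. (ii) If there exists $\lambda>0$ with $\|A-\lambda I_n\|_{\mathrm{op}}<\frac{\lambda}{1+\alpha}$, then $F_{A,\alpha}$ is $(\alpha+2)$-monotone.
   Context: $|\cdot|$ is the Euclidean norm, $\|A\|_{\mathrm{op}}=\max_{|x|=1}|Ax|$. A map $F:\mathbb R^n\to\mathbb R^n$ is monotone if $(F(u)-F(v))\cdot(u-v)\ge0$ for all $u,v$; for $\beta>0$ it is $\beta$-monotone if there is $C>0$ with $(F(u)-F(v))\cdot(u-v)\ge C|u-v|^\beta$ for all $u,v$. *)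

From HB Require Import structures.
From mathcomp Require Import all_boot all_order all_algebra.
From mathcomp Require Import all_classical all_reals.
From mathcomp Require Import exp.
Set Implicit Arguments. Unset Strict Implicit. Unset Printing Implicit Defensive.
Import Order.TTheory GRing.Theory Num.Theory.
Local Open Scope ring_scope.
Local Open Scope classical_set_scope.

Section Defs.
Variables (R : realType) (n : nat).

Definition enorm (u : 'cV[R]_n) : R := Num.sqrt (\sum_i (u i 0) ^+ 2).

Definition dotv (u v : 'cV[R]_n) : R := \sum_i u i 0 * v i 0.

Definition opnorm (A : 'M[R]_n) : R :=
  sup [set enorm (A *m x) | x in [set x : 'cV[R]_n | enorm x = 1]].

Definition FA (A : 'M[R]_n) (alpha : R) (u : 'cV[R]_n) : 'cV[R]_n :=
  (enorm u `^ alpha) *: (A *m u).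

Definition monotone_map (F : 'cV[R]_n -> 'cV[R]_n) : Prop :=
  forall u v, 0 <= dotv (F u - F v) (u - v).

Definition beta_monotone (beta : R) (F : 'cV[R]_n -> 'cV[R]_n) : Prop :=
  exists C : R, 0 < C /\
    forall u v, C * (enorm (u - v) `^ beta) <= dotv (F u - F v) (u - v).

End Defs.

From HB Require Import structures.
From mathcomp Require Import all_boot all_order all_algebra.
From mathcomp Require Import all_classical all_reals.
From mathcomp Require Import exp.
From mathcomp Require Import ring lra.
Import Order.TTheory GRing.Theory Num.Theory.
Set Implicit Arguments. Unset Strict Implicit.
Local Open Scope ring_scope.

(* Write [F = A o P] with [P(u) = |u|^alpha u] ([powmap]), and put
   [g = P u - P v], [d = u - v].  The whole argument rests on two estimates
   for the model nonlinearity [P]: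
   - [|g| |d| <= (1 + alpha) (g . d)]  ([powmap_dot_upper]), and
   - [|d|^(alpha+2) / 2^(1+alpha) <= g . d]  ([powmap_dot_lower]).
   Splitting [A = (A - lambda I) + lambda I] and using the operator norm bound
   [|(A - lambda I) g| <= beta |g|] with [beta = ||A - lambda I||] then gives
   [(F u - F v) . d >= (lambda - beta (1 + alpha)) (g . d)]  ([FA_dot_lower]),
   from which both parts of the theorem follow. *)

Section Euclid.
Variables (R : realType) (n : nat).
Implicit Types (u v w : 'cV[R]_n) (k : R).

Lemma dotvC u v : dotv u v = dotv v u.
Proof. by apply: eq_bigr => i _; rewrite mulrC. Qed.

Lemma dotvDl u v w : dotv (u + v) w = dotv u w + dotv v w.
Proof. by rewrite /dotv -big_split; apply: eq_bigr => i _; rewrite !mxE mulrDl. Qed.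

Lemma dotvZl k u v : dotv (k *: u) v = k * dotv u v.
Proof. by rewrite /dotv mulr_sumr; apply: eq_bigr => i _; rewrite !mxE mulrA. Qed.

Lemma dotvNl u v : dotv (- u) v = - dotv u v.
Proof. by rewrite -scaleN1r dotvZl mulN1r. Qed.

Lemma dotvBl u v w : dotv (u - v) w = dotv u w - dotv v w.
Proof. by rewrite dotvDl dotvNl. Qed.

Lemma dotvDr u v w : dotv w (u + v) = dotv w u + dotv w v.
Proof. by rewrite dotvC dotvDl !(dotvC w). Qed.

Lemma dotvBr u v w : dotv w (u - v) = dotv w u - dotv w v.
Proof. by rewrite dotvC dotvBl !(dotvC w). Qed.

Lemma dotvZr k u v : dotv v (k *: u) = k * dotv v u.
Proof. by rewrite dotvC dotvZl dotvC. Qed.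

Lemma dotvv_ge0 u : 0 <= dotv u u.
Proof. by apply: sumr_ge0 => i _; rewrite -expr2 sqr_ge0. Qed.

Lemma dotvv_eq0 u : dotv u u = 0 -> u = 0.
Proof.
move=> u0; apply/matrixP => i j; rewrite ord1 mxE.
apply/eqP; rewrite -[_ == 0]orbb -mulf_eq0; apply/eqP.
by apply: (psumr_eq0P _ u0) => // k _; rewrite -expr2 sqr_ge0.
Qed.

Lemma dotv0l v : dotv 0 v = 0.
Proof. by rewrite -(scale0r 0) dotvZl mul0r. Qed.

(* Cauchy--Schwarz, squared form: expand [0 <= |a v - b u|^2] with
   [a = u.u] and [b = u.v]. *)
Lemma dotv_CS u v : dotv u v ^+ 2 <= dotv u u * dotv v v.
Proof.
set a := dotv u u; set b := dotv u v; set c := dotv v v.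
have [a0 | a_neq0] := eqVneq a 0.
  by rewrite /b (dotvv_eq0 a0) dotv0l a0 expr0n mul0r.
have a_gt0 : 0 < a by rewrite lt_def a_neq0 dotvv_ge0.
have : 0 <= dotv (a *: v - b *: u) (a *: v - b *: u) by exact: dotvv_ge0.
rewrite !(dotvBl, dotvBr, dotvZl, dotvZr) (dotvC v u) -/a -/b -/c.
have -> : a * (a * c - b * b) - b * (a * b - b * a) = a * (a * c - b ^+ 2) by ring.
by rewrite pmulr_rge0 // subr_ge0.
Qed.

Lemma enorm_ge0 u : 0 <= enorm u.
Proof. exact: sqrtr_ge0. Qed.

Lemma sumsq_dotv u : \sum_i u i 0 ^+ 2 = dotv u u.
Proof. by apply: eq_bigr => i _; rewrite expr2. Qed.

Lemma enorm_sq u : enorm u ^+ 2 = dotv u u.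
Proof. by rewrite sqr_sqrtr sumsq_dotv ?dotvv_ge0. Qed.

Lemma enormN u : enorm (- u) = enorm u.
Proof. by rewrite /enorm; congr Num.sqrt; apply: eq_bigr => i _; rewrite mxE sqrrN. Qed.

Lemma enormZ k u : enorm (k *: u) = `|k| * enorm u.
Proof.
rewrite /enorm -sqrtr_sqr -sqrtrM ?sqr_ge0 //; congr Num.sqrt.
by rewrite mulr_sumr; apply: eq_bigr => i _; rewrite !mxE exprMn.
Qed.

Lemma dotv_le u v : `|dotv u v| <= enorm u * enorm v.
Proof.
rewrite -ler_sqr ?nnegrE ?mulr_ge0 ?enorm_ge0 // real_normK ?num_real //.
by rewrite exprMn !enorm_sq dotv_CS.
Qed.

Lemma enormD_le u v : enorm (u + v) <= enorm u + enorm v.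
Proof.
rewrite -ler_sqr ?nnegrE ?addr_ge0 ?enorm_ge0 // enorm_sq sqrrD !enorm_sq.
rewrite !(dotvDl, dotvDr) (dotvC v u).
have := dotv_le u v; rewrite ler_norml => /andP[_ uv_le].
rewrite mulr2n; lra.
Qed.

End Euclid.

Section OperatorNorm.
Variables (R : realType) (n : nat).
Implicit Types (B : 'M[R]_n) (x : 'cV[R]_n).

Definition unit_image B : set R :=
  [set enorm (B *m x) | x in [set x | enorm x = 1]].

(* Every matrix is a bounded operator: each coordinate of [B x] is the inner
   product of a row of [B] with [x], so Cauchy--Schwarz bounds [|B x|] by the
   Frobenius norm of [B] times [|x|]. *)
Lemma mulmx_bounded B : exists M, forall x, enorm (B *m x) <= M * enorm x.
Proof.
exists (Num.sqrt (\sum_i dotv (row i B)^T (row i B)^T)) => x.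
rewrite /enorm -sqrtrM; last by apply: sumr_ge0 => i _; exact: dotvv_ge0.
apply: ler_wsqrtr; rewrite mulr_suml; apply: ler_sum => i _.
have -> : (B *m x) i 0 = dotv (row i B)^T x.
  by rewrite mxE; apply: eq_bigr => j _; rewrite !mxE.
by rewrite sumsq_dotv dotv_CS.
Qed.

Lemma opnormE B : opnorm B = sup (unit_image B).
Proof. by []. Qed.

Lemma unit_image_ubound B : has_ubound (unit_image B).
Proof.
have [M BM] := mulmx_bounded B.
by exists M => _ [x /= x1 <-]; have := BM x; rewrite x1 mulr1.
Qed.

(* In dimension [0] the unit sphere is empty and [opnorm B = sup set0 = 0]. *)
Lemma opnorm_ge0 B : 0 <= opnorm B.
Proof.
rewrite opnormE.
have [->|/set0P[y By]] := eqVneq (unit_image B) set0; first by rewrite sup0.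
apply: le_trans (ub_le_sup (unit_image_ubound B) By).
by case: By => x _ <-; exact: enorm_ge0.
Qed.

Lemma opnorm_bound B x : enorm (B *m x) <= opnorm B * enorm x.
Proof.
have [x0 | x_neq0] := eqVneq (enorm x) 0.
  have [M BM] := mulmx_bounded B.
  by have := BM x; rewrite x0 !mulr0.
have x_gt0 : 0 < enorm x by rewrite lt_def x_neq0 enorm_ge0.
have unit_x : enorm ((enorm x)^-1 *: x) = 1.
  by rewrite enormZ ger0_norm ?invr_ge0 ?enorm_ge0 // mulVf.
rewrite opnormE.
have := ub_le_sup (unit_image_ubound B) (ex_intro2 _ _ _ unit_x erefl).
by rewrite -scalemxAr enormZ ger0_norm ?invr_ge0 ?enorm_ge0 // mulrC ler_pdivrMr.
Qed.

End OperatorNorm.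

Section ScalarInequalities.
Variable R : realType.
Implicit Types (alpha r s y : R).

Lemma ln_le_subr1 y : 0 < y -> 1 + ln y <= y.
Proof. by move=> y0; rewrite -[leRHS]lnK ?posrE // expR_ge1Dx. Qed.

(* A tangent-line estimate for [x |-> x `^ alpha] on [(0, +oo)]:
   [s^a = r^a (s/r)^a >= r^a (1 + a ln (s/r)) >= r^a (1 - a (r/s - 1))]. *)
Lemma powR_diff_le alpha r s : 0 <= alpha -> 0 < r -> 0 < s ->
  (r `^ alpha - s `^ alpha) * s <= alpha * r `^ alpha * (r - s).
Proof.
move=> alpha0 r0 s0.
have rs0 : 0 < r / s by rewrite divr_gt0.
have ln_sr : 1 - r / s <= ln (s / r).
  by rewrite -[s / r]invf_div lnV ?posrE //; have := ln_le_subr1 rs0; lra.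
have pow_sr : 1 + alpha * ln (s / r) <= (s / r) `^ alpha.
  by rewrite -ln_powR ln_le_subr1 // powR_gt0 // divr_gt0.
have pow_s : s `^ alpha = r `^ alpha * (s / r) `^ alpha.
  by rewrite -powRM ?divr_ge0 ?(ltW r0) ?(ltW s0) // mulrC divfK ?gt_eqF.
have ra0 : 0 < r `^ alpha := powR_gt0 alpha r0.
have : r `^ alpha * (1 - alpha * (r / s - 1)) <= s `^ alpha.
  rewrite pow_s ler_wpM2l ?(ltW ra0) //; apply: le_trans pow_sr; nra.
have -> : alpha * r `^ alpha * (r - s) = alpha * r `^ alpha * (r / s - 1) * s.
  by field; rewrite gt_eqF.
move=> lower; apply: ler_wpM2r; [exact: ltW | nra].
Qed.

(* The form in which [powR_diff_le] enters the monotonicity estimate,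
   using [(r - s) s <= (r^2 - s^2) / 2] for [0 <= s <= r]. *)
Lemma powR_gap_le alpha r s : 0 <= alpha -> 0 <= s <= r ->
  (r `^ alpha - s `^ alpha) * s ^+ 2 <= alpha * r `^ alpha * (r ^+ 2 - s ^+ 2) / 2.
Proof.
move=> alpha0 /andP[s0 sr].
have ra0 : 0 <= alpha * r `^ alpha by rewrite mulr_ge0 ?powR_ge0.
have [-> | s_neq0] := eqVneq s 0.
  by rewrite expr0n /= mulr0 subr0 divr_ge0 // mulr_ge0 // sqr_ge0.
have s_gt0 : 0 < s by rewrite lt_def s_neq0.
have := powR_diff_le alpha0 (lt_le_trans s_gt0 sr) s_gt0.
move=> /(ler_wpM2r (ltW s_gt0)) diff_le.
rewrite expr2 mulrA; apply: le_trans diff_le _.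
have : 0 <= alpha * r `^ alpha * (r - s) ^+ 2 by rewrite mulr_ge0 ?sqr_ge0.
nra.
Qed.

Lemma powRD_le alpha r s : 0 <= alpha -> 0 <= r -> 0 <= s ->
  (r + s) `^ alpha <= 2 `^ alpha * (r `^ alpha + s `^ alpha).
Proof.
wlog sr : r s / s <= r => [hwlog alpha0 r0 s0|alpha0 r0 s0].
  have [/hwlog|/ltW/hwlog] := leP s r; first exact.
  by rewrite addrC [_ + s `^ _]addrC; apply.
apply: (@le_trans _ _ ((2 * r) `^ alpha)).
  by rewrite ge0_ler_powR ?nnegrE ?addr_ge0 ?mulr_ge0 //; lra.
by rewrite powRM // ler_wpM2l ?powR_ge0 // lerDl powR_ge0.
Qed.

Lemma powR_sqr_comonotone alpha r s : 0 <= alpha -> 0 <= r -> 0 <= s ->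
  0 <= (r `^ alpha - s `^ alpha) * (r ^+ 2 - s ^+ 2).
Proof.
move=> alpha0 r0 s0.
have [sr | rs] := leP s r.
  by rewrite mulr_ge0 // subr_ge0 ?ge0_ler_powR ?lerXn2r ?nnegrE.
rewrite -mulrNN !opprB mulr_ge0 // subr_ge0.
  by rewrite ge0_ler_powR ?nnegrE ?(ltW rs).
by rewrite lerXn2r ?nnegrE ?(ltW rs).
Qed.

(* The quadratic inequality behind the [(1 + alpha)] constant.  With
   [K = 2 alpha b + (1 + alpha) D], the hypothesis yields
   [D r^2 <= (1 + alpha) E K],
   and [K] times the gap is the sum of squares
   [((K Q - D r)^2 + D ((1 + alpha) E K - D r^2)) / 2]. *)
Lemma quadratic_gap_ge0 (alpha b D r Q E : R) :
  0 <= alpha -> 0 <= b -> 0 <= D -> 0 <= E ->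
  D * (r ^+ 2 - E) <= alpha * (b + D) * E / 2 ->
  (b * Q + D * r) * Q <= (1 + alpha) * (b * Q ^+ 2 + D * (Q ^+ 2 + E) / 2).
Proof.
move=> alpha0 b0 D0 E0 hyp.
set K := 2 * alpha * b + (1 + alpha) * D.
have K0 : 0 <= K by rewrite /K; nra.
have DrK : D * r ^+ 2 <= (1 + alpha) * E * K.
  have : 0 <= alpha * b * E * (3 + 4 * alpha) by rewrite !mulr_ge0 //; lra.
  have : 0 <= alpha * D * E * (3 + 2 * alpha) by rewrite !mulr_ge0 //; lra.
  rewrite /K; lra.
rewrite -subr_ge0.
have [K_eq0 | K_neq0] := eqVneq K 0.
  have -> : D = 0 by rewrite /K in K_eq0; nra.
  have := mulr_ge0 (mulr_ge0 alpha0 b0) (sqr_ge0 Q).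
  lra.
have K_gt0 : 0 < K by rewrite lt_def K_neq0 K0.
rewrite -(pmulr_rge0 _ K_gt0).
have -> : K * ((1 + alpha) * (b * Q ^+ 2 + D * (Q ^+ 2 + E) / 2) - (b * Q + D * r) * Q)
    = ((K * Q - D * r) ^+ 2 + D * ((1 + alpha) * E * K - D * r ^+ 2)) / 2.
  by rewrite /K; field.
by rewrite divr_ge0 // addr_ge0 ?sqr_ge0 // mulr_ge0 // subr_ge0.
Qed.

End ScalarInequalities.

Section PowerMap.
Variables (R : realType) (n : nat) (alpha : R).
Hypothesis alpha_ge0 : 0 <= alpha.
Implicit Types (u v : 'cV[R]_n).

Definition powmap u : 'cV[R]_n := enorm u `^ alpha *: u.

Lemma FA_powmap (A : 'M[R]_n) u : FA A alpha u = A *m powmap u.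
Proof. by rewrite /FA /powmap scalemxAr. Qed.

Lemma enormB_sq u v :
  enorm (u - v) ^+ 2 = enorm u ^+ 2 - 2 * dotv u v + enorm v ^+ 2.
Proof. by rewrite !enorm_sq !(dotvBl, dotvBr) (dotvC v u); ring. Qed.

Lemma powmap_dotE u v :
  let a := enorm u `^ alpha in let b := enorm v `^ alpha in
  dotv (powmap u - powmap v) (u - v) =
  (a + b) * enorm (u - v) ^+ 2 / 2 + (a - b) * (enorm u ^+ 2 - enorm v ^+ 2) / 2.
Proof.
move=> a b; rewrite enormB_sq !enorm_sq !(dotvBl, dotvBr, dotvZl) (dotvC v u).
by rewrite -/a -/b; field.
Qed.

(* [powmap] is [(alpha + 2)]-monotone: the second term of [powmap_dotE] is
   nonnegative, and [|d|^alpha <= (|u| + |v|)^alpha <= 2^alpha (a + b)]. *)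
Lemma powmap_dot_lower u v :
  enorm (u - v) `^ (alpha + 2) / (2 * 2 `^ alpha) <=
  dotv (powmap u - powmap v) (u - v).
Proof.
set a := enorm u `^ alpha; set b := enorm v `^ alpha; set Q := enorm (u - v).
have pow2_gt0 : 0 < 2 `^ alpha by rewrite powR_gt0.
have Q_le : Q `^ alpha <= 2 `^ alpha * (a + b).
  apply: le_trans (powRD_le alpha_ge0 (enorm_ge0 u) (enorm_ge0 v)).
  have := enormD_le u (- v); rewrite enormN => Q_le_sum.
  by rewrite ge0_ler_powR ?nnegrE ?addr_ge0 ?enorm_ge0.
have Q_pow : Q `^ (alpha + 2) = Q `^ alpha * Q ^+ 2.
  have alpha2_neq0 : alpha + 2 != 0 by apply: lt0r_neq0; rewrite ltr_wpDl.
  by rewrite powRD ?(negPf alpha2_neq0) // powR_mulrn ?enorm_ge0.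
rewrite powmap_dotE -/a -/b -/Q ler_pdivrMr ?mulr_gt0 // Q_pow.
have := powR_sqr_comonotone alpha_ge0 (enorm_ge0 u) (enorm_ge0 v).
rewrite -/a -/b => comonotone.
have := ler_wpM2r (sqr_ge0 Q) Q_le.
nra.
Qed.

(* For [|v| <= |u|] write
   [powmap u - powmap v = b (u - v) + (a - b) u] and conclude with
   [quadratic_gap_ge0]; the other case follows by symmetry. *)
Lemma powmap_dot_upper u v :
  enorm (powmap u - powmap v) * enorm (u - v) <=
  (1 + alpha) * dotv (powmap u - powmap v) (u - v).
Proof.
wlog vu : u v / enorm v <= enorm u => [hwlog|].
  have [/hwlog //|/ltW/hwlog] := leP (enorm v) (enorm u).
  by rewrite -(opprB u) -(opprB (powmap u)) !enormN dotvNl dotvC dotvNl dotvC opprK.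
set r := enorm u; set s := enorm v; set a := r `^ alpha; set b := s `^ alpha.
set Q := enorm (u - v); set D := a - b.
have b0 : 0 <= b by exact: powR_ge0.
have D0 : 0 <= D by rewrite subr_ge0 ge0_ler_powR ?nnegrE ?enorm_ge0.
have decomp : powmap u - powmap v = b *: (u - v) + D *: u.
  by apply/matrixP => i j; rewrite !mxE -/r -/s -/a -/b /D; ring.
have norm_le : enorm (powmap u - powmap v) <= b * Q + D * r.
  rewrite decomp; apply: le_trans (enormD_le _ _) _.
  by rewrite !enormZ !ger0_norm.
have dotE : dotv (powmap u - powmap v) (u - v) =
    b * Q ^+ 2 + D * (Q ^+ 2 + (r ^+ 2 - s ^+ 2)) / 2.
  rewrite decomp dotvDl !dotvZl -enorm_sq -/Q enormB_sq -/r -/s !dotvBr !enorm_sq.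
  by rewrite -/r -/s; field.
apply: le_trans (ler_wpM2r (enorm_ge0 _) norm_le) _; rewrite dotE.
apply: quadratic_gap_ge0 => //; first by rewrite subr_ge0 lerXn2r ?nnegrE ?enorm_ge0.
have -> : r ^+ 2 - (r ^+ 2 - s ^+ 2) = s ^+ 2 by ring.
have -> : b + D = a by rewrite /D addrC subrK.
by apply: powR_gap_le; rewrite ?vu ?enorm_ge0.
Qed.

End PowerMap.

Lemma FA_dot_lower (R : realType) (n : nat) (A : 'M[R]_n) (alpha lambda : R)
    (u v : 'cV[R]_n) :
  0 <= alpha -> opnorm (A - lambda%:M) * (1 + alpha) <= lambda ->
  (lambda - opnorm (A - lambda%:M) * (1 + alpha)) *
    (enorm (u - v) `^ (alpha + 2) / (2 * 2 `^ alpha))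
  <= dotv (FA A alpha u - FA A alpha v) (u - v).
Proof.
move=> alpha0 small; set beta := opnorm (A - lambda%:M).
set g := powmap alpha u - powmap alpha v; set d := u - v.
have beta0 : 0 <= beta := opnorm_ge0 _.
have splitA : FA A alpha u - FA A alpha v = (A - lambda%:M) *m g + lambda *: g.
  by rewrite !FA_powmap -mulmxBr mulmxBl mul_scalar_mx subrK.
have perturb :
    - (beta * ((1 + alpha) * dotv g d)) <= dotv ((A - lambda%:M) *m g) d.
  have := dotv_le ((A - lambda%:M) *m g) d; rewrite ler_norml => /andP[+ _].
  apply: le_trans; rewrite lerN2.
  apply: le_trans (ler_wpM2r (enorm_ge0 _) (opnorm_bound _ _)) _.
  by rewrite -mulrA ler_wpM2l // powmap_dot_upper.
apply: le_trans (ler_wpM2l _ (powmap_dot_lower alpha0 u v)) _.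
  by rewrite subr_ge0.
rewrite splitA (dotvDl ((A - lambda%:M) *m g)) dotvZl; lra.
Qed.

Theorem mainTheorem11 (R : realType) (n : nat) (A : 'M[R]_n) (alpha : R) :
  0 < alpha ->
  ((exists lambda : R, 0 < lambda /\
      opnorm (A - lambda%:M) <= lambda / (1 + alpha)) ->
    monotone_map (FA A alpha)) /\
  ((exists lambda : R, 0 < lambda /\
      opnorm (A - lambda%:M) < lambda / (1 + alpha)) ->
    beta_monotone (alpha + 2) (FA A alpha)).
Proof.
move=> alpha_gt0; have alpha0 := ltW alpha_gt0.
have alpha1_gt0 : 0 < 1 + alpha by rewrite ltr_wpDr.
have pow2_gt0 : 0 < 2 * 2 `^ alpha by rewrite mulr_gt0 ?powR_gt0.
split=> [[lambda [_ small]] u v | [lambda [_ small]]].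
  rewrite ler_pdivlMr // in small.
  apply: le_trans (FA_dot_lower u v alpha0 small).
  by rewrite mulr_ge0 ?divr_ge0 ?powR_ge0 ?subr_ge0 // ltW.
rewrite ltr_pdivlMr // in small.
exists ((lambda - opnorm (A - lambda%:M) * (1 + alpha)) / (2 * 2 `^ alpha)); split.
  by rewrite divr_gt0 // subr_gt0.
move=> u v; rewrite mulrAC -mulrA.
exact: FA_dot_lower alpha0 (ltW small).
Qed.
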